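(* Let $T=(V,E,\gamma,\mathrm{p})$ and $T'=(V',E',\gamma',\mathrm{p}')$ be partially controllable fault trees, where $V$ and $V'$ need not be disjoint but $E,\gamma,\mathrm{p}$ and the children relation coincide with $E',\gamma',\mathrm{p}'$ and the children relation of $T'$ on $V\cap V'$. Let $v\in\mathrm{CBE}(T)\setminus V'$ and assume $\mathrm{BE}(T)\cap\mathrm{BE}(T')=\varnothing$. Let $T''=T[v\mapsto T']$ be the quasimodular composition. Then $\mathrm{CBE}(T'')=(\mathrm{CBE}(T)\setminus\{v\})\cup\mathrm{CBE}(T')$, and as elements of $\mathcal A(\mathrm{CBE}(T''))$, \[\langle U(T'')\rangle=\langle U(T)\rangle[\mathsf F_v\mapsto\langle U(T')\rangle].\]
   Context: A partially controllable fault tree (PCFT) is a tuple $T=(V,E,\gamma,\mathrm{p})$ where $(V,E)$ is a rooted directed acyclic graph (edges point from a node to its children; root $R_T$), $\gamma\colon V\to\{\mathtt{OR},\mathtt{AND},\mathtt{BE},\mathtt{CBE}\}$ with $\gamma(v)\in\{\mathtt{BE},\mathtt{CBE}\}$ iff $v$ is a leaf, and $\mathrm{p}\colon\mathrm{BE}(T)\to[0,1]$, where $\mathrm{BE}(T)=\{v\mid\gamma(v)=\mathtt{BE}\}$ and $\mathrm{CBE}(T)=\{v\mid\gamma(v)=\mathtt{CBE}\}$. The structure function $S_T(v,\vec f,\vec c)$ for $\vec f\in\{0,1\}^{\mathrm{BE}(T)}$, $\vec c\in\{0,1\}^{\mathrm{CBE}(T)}$ is $f_v$ if $\gamma(v)=\mathtt{BE}$,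 $c_v$ if $\gamma(v)=\mathtt{CBE}$, the disjunction of $S_T(w,\vec f,\vec c)$ over children $w$ if $\gamma(v)=\mathtt{OR}$, and the conjunction if $\gamma(v)=\mathtt{AND}$. With $\vec F$ a random vector with independent coordinates, $\mathbb P(F_v=1)=\mathrm{p}(v)$, the unreliability is the function $U(T)\colon\{0,1\}^{\mathrm{CBE}(T)}\to[0,1]$, $U(T)(\vec c)=\mathbb P(S_T(R_T,\vec F,\vec c)=1)$. Quasimodular composition $T[v\mapsto T']$: the PCFT obtained from $T$ by replacing the node $v$ by the whole PCFT $T'$, i.e. removing $v$, adding the nodes and edges of $T'$ (shared nodes identified), and redirecting every edge of $T$ that pointed to $v$ to point to $R_{T'}$ instead; labels and probabilities are inherited. Squarefree polynomial algebra: for a finite set $X$, $\mathcal A(X)$ is the real algebra of formal sums $\alpha=\sum_{Y\subseteq X}\alpha_Y\prod_{x\in Y}\mathsf F_x$ with polynomial addition and multiplication subject to $\mathsf F_x^2=\mathsf F_x$, i.e. $(\alpha+\beta)_Y=\alpha_Y+\beta_Y$, $(\alpha\beta)_Y=\sum_{Y'\cup Y''=Y}\alpha_{Y'}\beta_{Y''}$; elements of $\mathcal A(X)$ are regarded as elements of $\mathcal A(X')$ for $X\subseteq X'$. For $x\in X\setminus Y$, $\alpha\in\mathcal A(X)$, $\beta\in\mathcal A(Y)$, the substitution $\alpha[\mathsf F_x\mapsto\beta]\in\mathcal A((X\setminus\{x\})\cup Y)$ is $\beta\cdot\sum_{Z\ni x}\alpha_Z\prod_{x'\in Z\setminus\{x\}}\mathsf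 F_{x'}+\sum_{Z\not\ni x}\alpha_Z\prod_{x'\in Z}\mathsf F_{x'}$. For any function $g\colon\{0,1\}^X\to\mathbb R$ there is a unique $\langle g\rangle\in\mathcal A(X)$ with $g(\vec c)=\langle g\rangle[\forall x\in X\colon\mathsf F_x\mapsto c_x]$ for all $\vec c$; in particular $\langle U(T)\rangle\in\mathcal A(\mathrm{CBE}(T))$. *)

From Stdlib Require Import ClassicalEpsilon.
From HB Require Import structures.
From mathcomp Require Import all_boot all_order all_algebra.
Set Implicit Arguments. Unset Strict Implicit. Unset Printing Implicit Defensive.
Import Order.TTheory GRing.Theory Num.Theory.
Local Open Scope ring_scope.

Inductive gate := OR | AND | BE | CBE.

Definition is_BE (g : gate) : bool := if g is BE then true else false.
Definition is_CBE (g : gate) : bool := if g is CBE then true else false.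
Definition is_leaf_gate (g : gate) : bool :=
  match g with BE | CBE => true | _ => false end.

(* A PCFT whose nodes are drawn from an ambient finite type N:
   node set V, edge relation E (u -> w : w is a child of u), labelling gam,
   probabilities prob (only meaningful on BE nodes), root. *)
Record pcft (N : finType) (R : realFieldType) := Pcft {
  V : {set N};
  E : rel N;
  gam : N -> gate;
  prob : N -> R;
  root : N
}.

Section PCFT.
Variables (N : finType) (R : realFieldType).
Implicit Types (T : pcft N R).

Definition is_pcft T : Prop :=
  [/\ root T \in V T /\
      (forall u w, E T u w -> (u \in V T) && (w \in V T)),
      (forall u w, E T u w -> ~~ connect (E T) w u),
      (forall u, u \in V T -> connect (E T) (root T) u),
      (forall u, u \in V T -> is_leaf_gate (gam T u) = [forall w, ~~ E T u w])
    & (forall u, u \in V T -> is_BE (gam T u) -> 0 <= prob T u <= 1)].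

Definition BEs T : {set N} := [set u in V T | is_BE (gam T u)].
Definition CBEs T : {set N} := [set u in V T | is_CBE (gam T u)].

(* Structure function, with vectors f in {0,1}^BE and c in {0,1}^CBE
   represented as the sets of nodes set to 1.  Defined by recursion with
   fuel; on a DAG, fuel #|V| suffices to reach all leaves. *)
Fixpoint struct_fuel T (n : nat) (u : N) (f c : {set N}) : bool :=
  if n is n'.+1 then
    match gam T u with
    | BE => u \in f
    | CBE => u \in c
    | OR => [exists w, E T u w && struct_fuel T n' w f c]
    | AND => [forall w, E T u w ==> struct_fuel T n' w f c]
    end
  else false.

Definition S T (u : N) (f c : {set N}) : bool := struct_fuel T #|V T| u f c.

(* Unreliability: U(T)(c) = P(S_T(root, F, c) = 1), F having independent
   coordinates with P(F_x = 1) = prob x, written as the explicit sum over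
   all outcomes f ⊆ BE(T) of the product measure. *)
Definition U T (c : {set N}) : R :=
  \sum_(f : {set N} | f \subset BEs T)
     (\prod_(x in BEs T) (if x \in f then prob T x else 1 - prob T x))
     * (S T (root T) f c)%:R.

Definition compose T (v : N) (T' : pcft N R) : pcft N R :=
  Pcft ((V T :\ v) :|: V T')
    (fun u w => ((u \in V T :\ v) &&
                   (((w \in V T :\ v) && E T u w) ||
                    ((w == root T') && E T u v)))
                || E T' u w)
    (fun u => if u \in V T' then gam T' u else gam T u)
    (fun u => if u \in V T' then prob T' u else prob T u)
    (if root T == v then root T' else root T).

Definition agree T (T' : pcft N R) : Prop :=
  forall u, u \in V T -> u \in V T' ->
    [/\ gam T u = gam T' u, prob T u = prob T' u &
        forall w, E T u w = E T' u w].

End PCFT.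

(* Squarefree polynomial algebra: an element is its coefficient family
   (alpha_Y)_{Y}, indexed by finite sets Y of variables (nodes of N). *)
Section SqFree.
Variables (N : finType) (R : realFieldType).

Local Notation sqpoly := {ffun {set N} -> R}.

Definition inA (X : {set N}) (a : sqpoly) : Prop :=
  forall Y : {set N}, ~~ (Y \subset X) -> a Y = 0.

Definition sqadd (a b : sqpoly) : sqpoly := [ffun Y : {set N} => a Y + b Y].

Definition sqmul (a b : sqpoly) : sqpoly :=
  [ffun Y : {set N} => \sum_(Y1 : {set N}) \sum_(Y2 : {set N} | Y1 :|: Y2 == Y)
                a Y1 * b Y2].

(* alpha[F_x |-> beta]
   = beta * sum_{Z ∋ x} alpha_Z prod_{Z\{x}} F + sum_{Z ∌ x} alpha_Z prod_Z F *)
Definition sqsubst (a : sqpoly) (x : N) (b : sqpoly) : sqpoly :=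
  sqadd (sqmul b [ffun Y : {set N} => if x \in Y then 0 else a (x |: Y)])
        [ffun Y : {set N} => if x \in Y then 0 else a Y].

(* alpha[forall x : F_x |-> c_x], c in {0,1}^X given as the set of 1's *)
Definition sqeval (a : sqpoly) (c : {set N}) : R :=
  \sum_(Y : {set N}) a Y * \prod_(x in Y) (x \in c)%:R.

Definition represents (X : {set N}) (g : {set N} -> R) (a : sqpoly) : Prop :=
  inA X a /\ forall c : {set N}, c \subset X -> g c = sqeval a c.

(* <g> : the (unique) element of A(X) representing g : {0,1}^X -> R. *)
Definition rep (X : {set N}) (g : {set N} -> R) : sqpoly :=
  epsilon (inhabits [ffun _ : {set N} => (0:R)]) (represents X g).

End SqFree.

From mathcomp Require Import all_boot all_order all_algebra ring.
From Stdlib Require Import ClassicalEpsilon.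
Set Implicit Arguments. Unset Strict Implicit. Unset Printing Implicit Defensive.
Import Order.TTheory GRing.Theory Num.Theory.
Local Open Scope ring_scope.

(* Squarefree polynomials in A(X) are determined by their values at the 0/1 points of X
   (evaluation is a ring morphism, and a polynomial vanishing at all of them vanishes, by
   induction on the size of the monomials), so it suffices to compare both sides at every
   control vector c.  In T[v |-> T'] the subtree T' stands where T read the controllable
   event v, hence S_{T''}(f, c) = S_T(f, c with v := S_{T'}(f, c)).  As T and T' have
   disjoint independent basic events, conditioning on the outcome of T' gives
     U(T'')(c) = U(T')(c) U(T)(c ∪ {v}) + (1 - U(T')(c)) U(T)(c \ {v}),
   which is the value at c of <U(T)>[F_v |-> <U(T')>]. *)

Section SetFacts.
Variable N : finType.
Implicit Types (A B X : {set N}).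

Lemma mem_setI_eq A (f1 f2 : {set N}) x :
  f1 :&: A = f2 :&: A -> x \in A -> (x \in f1) = (x \in f2).
Proof.
by move=> f12 xA; have := congr1 (fun f : {set N} => x \in f) f12; rewrite !inE xA !andbT.
Qed.

Lemma setIUl_disjoint A B X : [disjoint B & X] -> (A :|: B) :&: X = A :&: X.
Proof. by move=> dBX; rewrite setIUl (disjoint_setI0 dBX) setU0. Qed.

End SetFacts.

Section Descendants.
Variable N : finType.
Implicit Types (e : rel N) (A : {set N}) (u w : N).

Definition acyclic e := forall u w, e u w -> ~~ connect e w u.

Definition ndesc e u := #|[set x | connect e u x]|.

Lemma ndesc_gt0 e u : (0 < ndesc e u)%N.
Proof. by apply/card_gt0P; exists u; rewrite inE connect0. Qed.

Lemma ndesc_lt e u w : acyclic e -> e u w -> (ndesc e w < ndesc e u)%N.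
Proof.
move=> acy euw; apply/proper_card/properP; split.
  by apply/subsetP => x; rewrite !inE; apply: connect_trans (connect1 euw).
by exists u; rewrite !inE ?connect0 ?acy.
Qed.

Lemma ndesc_le_card e A u : (forall u w, e u w -> w \in A) -> u \in A ->
  (ndesc e u <= #|A|)%N.
Proof.
move=> eA uA; apply/subset_leq_card/subsetP => x; rewrite inE.
case/connectP=> p; elim: p u uA => [|y p IHp] u uA /=; first by move=> _ ->.
by case/andP=> euy; apply: IHp; apply: eA euy.
Qed.

Lemma acyclic_rank e (r : N -> nat) : (forall u w, e u w -> (r w < r u)%N) ->
  acyclic e.
Proof.
move=> r_dec u w euw; apply/negP => /connectP[p pth wu].
have r_path x q : path e x q -> (r (last x q) <= r x)%N.
  elim: q x => [|y q IHq] x //= /andP[exy /IHq le_y].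
  exact: leq_trans le_y (ltnW (r_dec _ _ exy)).
by have := leq_ltn_trans (r_path _ _ pth) (r_dec _ _ euw); rewrite -wu ltnn.
Qed.

End Descendants.

Section StructureFunction.
Variables (N : finType) (R : realFieldType).
Implicit Types (T : pcft N R) (f c : {set N}) (W : {set N}).

Lemma struct_fuelS T n u f c : struct_fuel T n.+1 u f c =
  match gam T u with
  | BE => u \in f
  | CBE => u \in c
  | OR => [exists w, E T u w && struct_fuel T n w f c]
  | AND => [forall w, E T u w ==> struct_fuel T n w f c]
  end.
Proof. by []. Qed.

Lemma struct_fuel_succ T n u f c : acyclic (E T) -> (ndesc (E T) u <= n)%N ->
  struct_fuel T n.+1 u f c = struct_fuel T n u f c.
Proof.
move=> acy; elim: n u => [|n IHn] u le_u.
  by have := leq_trans (ndesc_gt0 _ u) le_u.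
have le_w w : E T u w -> (ndesc (E T) w <= n)%N.
  by move=> euw; rewrite -ltnS; apply: leq_trans (ndesc_lt acy euw) le_u.
rewrite struct_fuelS [RHS]struct_fuelS; case: (gam T u) => //.
  by apply: eq_existsb => w; apply: andb_id2l => /le_w /IHn.
by apply: eq_forallb => w; apply: implyb_id2l => /le_w /IHn.
Qed.

Lemma struct_fuel_stable T n m u f c : acyclic (E T) ->
  (ndesc (E T) u <= n)%N -> (ndesc (E T) u <= m)%N ->
  struct_fuel T n u f c = struct_fuel T m u f c.
Proof.
move=> acy.
wlog le_nm : n m / (n <= m)%N => [hwlog le_n le_m|le_n _].
  by case: (leqP n m) => [|/ltnW] le; [|symmetry]; apply: hwlog.
rewrite -(subnKC le_nm); elim: (m - n)%N => [|k IHk]; first by rewrite addn0.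
by rewrite addnS struct_fuel_succ // (leq_trans le_n) ?leq_addr.
Qed.

Lemma eq_struct_fuel T1 T2 W f1 f2 c1 c2 :
  {in W, gam T1 =1 gam T2} ->
  {in W, forall u w, E T1 u w = E T2 u w} ->
  {in W, forall u w, E T2 u w -> w \in W} ->
  {in W, forall x, gam T2 x = BE -> (x \in f1) = (x \in f2)} ->
  {in W, forall x, gam T2 x = CBE -> (x \in c1) = (x \in c2)} ->
  forall n, {in W, forall u, struct_fuel T1 n u f1 c1 = struct_fuel T2 n u f2 c2}.
Proof.
move=> eq_gam eq_E W_closed eq_f eq_c; elim=> [|n IHn] u uW //.
rewrite !struct_fuelS eq_gam //; case gu: (gam T2 u); rewrite ?eq_f ?eq_c //.
  by apply: eq_existsb => w; rewrite eq_E //; apply: andb_id2l => /W_closed/IHn->.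
by apply: eq_forallb => w; rewrite eq_E //; apply: implyb_id2l => /W_closed/IHn->.
Qed.

End StructureFunction.

Section SquarefreePolynomials.
Variables (N : finType) (R : realFieldType).
Local Notation sqpoly := {ffun {set N} -> R}.
Implicit Types (a b p : sqpoly) (c X Y Z : {set N}) (x : N).

Definition sqvar x : sqpoly := [ffun Y : {set N} => (Y == [set x])%:R].

(* a = sqpart0 x a + F_x * sqpart1 x a, the decomposition used by sqsubst. *)
Definition sqpart0 x a : sqpoly := [ffun Y : {set N} => if x \in Y then 0 else a Y].
Definition sqpart1 x a : sqpoly := [ffun Y : {set N} => if x \in Y then 0 else a (x |: Y)].

Lemma sqsubstE a x b : sqsubst a x b = sqadd (sqmul b (sqpart1 x a)) (sqpart0 x a).
Proof. by []. Qed.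

Lemma sum_setU1 x (F : {set N} -> R) :
  \sum_(Y : {set N} | x \in Y) F Y = \sum_(Z : {set N} | x \notin Z) F (x |: Z).
Proof.
rewrite (reindex_onto (fun Z => x |: Z) (fun Y : {set N} => Y :\ x)) => [|Y xY]; last first.
  exact: setD1K.
apply: eq_bigl => Z; rewrite setU11 /=.
case: (boolP (x \in Z)) => [xZ | xNZ]; last by rewrite setU1K ?eqxx.
by case: eqP => // ZxZ; move: xZ; rewrite -ZxZ setD11.
Qed.

Lemma sqevalE a c : sqeval a c = \sum_Y a Y * (Y \subset c)%:R.
Proof.
apply: eq_bigr => Y _; congr (_ * _).
case: (boolP (Y \subset c)) => [/subsetP Yc | /subsetPn[x xY xNc]].
  by rewrite big1 // => x /Yc->.
by rewrite (bigD1 x) //= (negbTE xNc) mul0r.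
Qed.

Lemma sqeval_inA X a c : inA X a -> sqeval a c = sqeval a (c :&: X).
Proof.
move=> aX; rewrite !sqevalE; apply: eq_bigr => Y _.
case: (boolP (Y \subset X)) => [YX | /aX->]; last by rewrite !mul0r.
by rewrite subsetI YX andbT.
Qed.

Lemma sqeval_free x p c1 c2 : inA [set~ x] p -> c1 :\ x = c2 :\ x ->
  sqeval p c1 = sqeval p c2.
Proof. by move=> px c12; rewrite (sqeval_inA _ px) [RHS](sqeval_inA _ px) -!setDE c12. Qed.

Lemma sqevalD a b c : sqeval (sqadd a b) c = sqeval a c + sqeval b c.
Proof. by rewrite /sqeval -big_split; apply: eq_bigr => Y _; rewrite ffunE mulrDl. Qed.

Lemma sqevalB a b c : sqeval (a - b) c = sqeval a c - sqeval b c.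
Proof. by rewrite /sqeval -sumrB; apply: eq_bigr => Y _; rewrite !ffunE mulrBl. Qed.

Lemma sqevalM a b c : sqeval (sqmul a b) c = sqeval a c * sqeval b c.
Proof.
rewrite !sqevalE big_distrlr /=.
under eq_bigr => Y _ do rewrite ffunE big_distrl /=.
under eq_bigr => Y _ do under eq_bigr => Y1 _ do rewrite big_distrl /=.
rewrite exchange_big /=; apply: eq_bigr => Y1 _.
rewrite (exchange_big_dep xpredT) //=; apply: eq_bigr => Y2 _.
rewrite (big_pred1 (Y1 :|: Y2)) => [|Y]; last by rewrite /= eq_sym.
by rewrite subUset -mulnb natrM mulrACA.
Qed.

Lemma sqeval_var x c : sqeval (sqvar x) c = (x \in c)%:R.
Proof.
rewrite sqevalE (bigD1 [set x]) //= big1 => [|Y /negbTE YNx]; last first.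
  by rewrite ffunE YNx mul0r.
by rewrite ffunE eqxx mul1r addr0 sub1set.
Qed.

Lemma sqeval_split x a c :
  sqeval a c = sqeval (sqpart0 x a) c + (x \in c)%:R * sqeval (sqpart1 x a) c.
Proof.
rewrite !sqevalE (bigID (fun Y : {set N} => x \in Y)) addrC /= sum_setU1 big_distrr /=.
have drop_x (F : {set N} -> R) : (forall Y, x \in Y -> F Y = 0) ->
    \sum_(Y : {set N}) F Y = \sum_(Y : {set N} | x \notin Y) F Y.
  by move=> F0; rewrite (bigID (fun Y : {set N} => x \in Y)) /= big1 ?add0r.
rewrite !drop_x => [|Y xY|Y xY]; rewrite ?ffunE ?xY ?mul0r ?mulr0 //.
congr (_ + _); apply: eq_bigr => Y /negbTE xNY; rewrite !ffunE xNY //.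
by rewrite subUset sub1set -mulnb natrM mulrCA.
Qed.

Lemma inA_setT a : inA setT a.
Proof. by move=> Y; rewrite subsetT. Qed.

Lemma inA_subset X1 X2 a : X1 \subset X2 -> inA X1 a -> inA X2 a.
Proof. by move=> X12 aX1 Y YNX2; apply: aX1; apply: contra YNX2 => /subset_trans->. Qed.

Lemma inA_add X a b : inA X a -> inA X b -> inA X (sqadd a b).
Proof. by move=> aX bX Y YX; rewrite ffunE aX ?bX ?addr0. Qed.

Lemma inA_sub X a b : inA X a -> inA X b -> inA X (a - b).
Proof. by move=> aX bX Y YX; rewrite !ffunE aX ?bX ?subrr. Qed.

Lemma inA_mul X1 X2 a b : inA X1 a -> inA X2 b -> inA (X1 :|: X2) (sqmul a b).
Proof.
move=> aX1 bX2 Y YX; rewrite ffunE big1 // => Y1 _; rewrite big1 // => Y2 /eqP Y12.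
case: (boolP (Y1 \subset X1)) => [Y1X1 | /aX1->]; last by rewrite mul0r.
case: (boolP (Y2 \subset X2)) => [Y2X2 | /bX2->]; last by rewrite mulr0.
by move: YX; rewrite -Y12 setUSS.
Qed.

Lemma inA_var x : inA [set x] (sqvar x).
Proof. by move=> Y YNx; rewrite ffunE; case: eqP YNx => // ->; rewrite subxx. Qed.

Lemma inA_sqpart0 X x a : inA X a -> inA (X :\ x) (sqpart0 x a).
Proof.
move=> aX Y; rewrite subsetD1 ffunE negb_and negbK.
by case: (x \in Y); rewrite ?orbF //; apply: aX.
Qed.

Lemma inA_sqpart1 X x a : inA X a -> inA (X :\ x) (sqpart1 x a).
Proof.
move=> aX Y; rewrite subsetD1 ffunE negb_and negbK.
case: (x \in Y); rewrite ?orbF // => YNX; apply: aX; apply: contra YNX.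
exact: subset_trans (subsetU1 x Y).
Qed.

Lemma sqeval_sqsubst a x b c : sqeval (sqsubst a x b) c =
  sqeval b c * sqeval a (x |: c) + (1 - sqeval b c) * sqeval a (c :\ x).
Proof.
have freeE p : inA (setT :\ x) p -> sqeval p (x |: c) = sqeval p c /\
    sqeval p (c :\ x) = sqeval p c.
  rewrite setTD => px; split; apply: (sqeval_free px); apply/setP => y.
    by rewrite !inE; case: eqP.
  by rewrite !inE andbA andbb.
have [e0U e0D] := freeE _ (inA_sqpart0 (x := x) (inA_setT a)).
have [e1U e1D] := freeE _ (inA_sqpart1 (x := x) (inA_setT a)).
rewrite sqsubstE sqevalD sqevalM (sqeval_split x a (x |: c)) (sqeval_split x a (c :\ x)).
rewrite e0U e0D e1U e1D setU11 setD11 /=; ring.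
Qed.

Lemma sqeval_eq0 X p : inA X p -> (forall c, c \subset X -> sqeval p c = 0) -> p = 0.
Proof.
move=> pX p0; apply/ffunP => Y; rewrite ffunE.
elim: {Y}_.+1 {-2}Y (ltnSn #|Y|) => // n IHn Y ltYn.
case: (boolP (Y \subset X)) => [YX | /pX//].
rewrite -(p0 Y YX) sqevalE (bigD1 Y) //= subxx mulr1 big1 ?addr0 // => Z ZNY.
case: (boolP (Z \subset Y)) => ZY; rewrite ?mulr0 // IHn ?mul0r //.
by rewrite -ltnS (leq_trans _ ltYn) // ltnS proper_card // properEneq ZNY.
Qed.

End SquarefreePolynomials.

Arguments sqvar {N R} x.
Arguments inA_var {N R} x.

Section Representation.
Variables (N : finType) (R : realFieldType).
Local Notation sqpoly := {ffun {set N} -> R}.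
Implicit Types (a b : sqpoly) (c X : {set N}) (g h k : {set N} -> R).

Lemma represents_exists X g : exists a, represents X g a.
Proof.
elim: {X}_.+1 {-2}X (ltnSn #|X|) g => // n IHn X ltXn g.
have [-> | [x xX]] := set_0Vmem X.
  exists [ffun Y : {set N} => (Y == set0)%:R * g set0]; split.
    by move=> Y; rewrite ffunE subset0 => /negbTE->; rewrite mul0r.
  move=> c; rewrite subset0 => /eqP->; rewrite sqevalE (bigD1 set0) //= big1.
    by rewrite ffunE eqxx sub0set !mul1r mulr1 addr0.
  by move=> Y /negbTE Y0; rewrite ffunE Y0 !mul0r.
have ltXx : (#|X :\ x| < n)%N by move: ltXn; rewrite (cardsD1 x) xX.
have [a0 [a0X ga0]] := IHn _ ltXx (fun c => g (c :\ x)).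
have [a1 [a1X ga1]] := IHn _ ltXx (fun c => g (x |: c)).
exists (sqadd a0 (sqmul (sqvar x) (a1 - a0))); split.
  apply: inA_add; first exact: inA_subset (subsetDl X [set x]) a0X.
  by rewrite -(setD1K xX); apply: inA_mul (inA_var x) (inA_sub a1X a0X).
move=> c cX; rewrite sqevalD sqevalM sqeval_var sqevalB.
have cXx : c :&: (X :\ x) = c :\ x by rewrite !setDE setIA (setIidPl cX).
rewrite (sqeval_inA _ a0X) (sqeval_inA _ a1X) cXx -ga0 ?setSD // -ga1 ?setSD //.
have -> : c :\ x :\ x = c :\ x by apply/setP => y; rewrite !inE andbA andbb.
have -> : x |: c :\ x = x |: c by apply/setP => y; rewrite !inE; case: eqP.
case: (boolP (x \in c)) => [xc | xNc].
  by rewrite (setUidPr _) ?sub1set // mul1r addrC subrK.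
by rewrite mul0r addr0 (setDidPl _) // disjoint_sym disjoints1.
Qed.

Lemma represents_rep X g : represents X g (rep X g).
Proof. by apply: epsilon_spec; have [a ga] := represents_exists X g; exists a. Qed.

Lemma rep_unique X g a : represents X g a -> rep X g = a.
Proof.
move=> [aX ga]; have [rX gr] := represents_rep X g.
apply/subr0_eq/(sqeval_eq0 (inA_sub rX aX)) => c cX.
by rewrite sqevalB -gr // -ga // subrr.
Qed.

Lemma represents_eval X g a : represents X g a -> (forall c, g c = g (c :&: X)) ->
  forall c, g c = sqeval a c.
Proof. by move=> [aX ga] gX c; rewrite gX ga ?subsetIr // -sqeval_inA. Qed.

Lemma represents_sqsubst X X' x g h k a b :
  represents X g a -> represents X' h b ->
  (forall c, g c = g (c :&: X)) -> (forall c, h c = h (c :&: X')) ->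
  (forall c, k c = h c * g (x |: c) + (1 - h c) * g (c :\ x)) ->
  represents ((X :\ x) :|: X') k (sqsubst a x b).
Proof.
move=> ga hb gX hX kE; split => [|c _].
  rewrite sqsubstE; apply: inA_add.
    by rewrite setUC; apply: inA_mul hb.1 (inA_sqpart1 (x := x) ga.1).
  exact: inA_subset (subsetUl _ _) (inA_sqpart0 (x := x) ga.1).
by rewrite kE sqeval_sqsubst !(represents_eval ga gX) (represents_eval hb hX).
Qed.

End Representation.

Section ProductWeights.
Variables (N : finType) (R : realFieldType).
Implicit Types (A B f : {set N}) (p q : N -> R).

Definition weight A p f : R := \prod_(x in A) (if x \in f then p x else 1 - p x).

Lemma sum_subset_setU A B (F : {set N} -> R) : [disjoint A & B] ->
  \sum_(f : {set N} | f \subset A :|: B) F f =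
  \sum_(f1 : {set N} | f1 \subset A) \sum_(f2 : {set N} | f2 \subset B) F (f1 :|: f2).
Proof.
move=> dAB; rewrite pair_big_dep /=.
rewrite (reindex_onto (fun f12 : {set N} * {set N} => f12.1 :|: f12.2)
                      (fun f : {set N} => (f :&: A, f :&: B))) => [|f fAB]; last first.
  by rewrite -setIUr (setIidPl fAB).
apply: eq_bigl => -[f1 f2] /=; apply/andP/andP => [[_ /eqP[<- <-]] | [f1A f2B]].
  by rewrite !subsetIr.
have f1B : [disjoint f1 & B] := disjointWl f1A dAB.
have f2A : [disjoint f2 & A] by rewrite disjoint_sym (disjointWr f2B).
split; first exact: setUSS.
by rewrite !setIUl (setIidPl f1A) (setIidPl f2B) !disjoint_setI0 // setU0 set0U.
Qed.

Lemma weight_setU A B p f : [disjoint A & B] ->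
  weight (A :|: B) p f = weight A p f * weight B p f.
Proof.
by move=> dAB; rewrite -bigU //; apply: eq_bigl => x; rewrite !inE.
Qed.

Lemma eq_weight A p q f1 f2 : {in A, p =1 q} -> f1 :&: A = f2 :&: A ->
  weight A p f1 = weight A q f2.
Proof.
by move=> epq f12; apply: eq_bigr => x xA; rewrite epq // (mem_setI_eq f12 xA).
Qed.

Lemma sum_weight A p : \sum_(f : {set N} | f \subset A) weight A p f = 1.
Proof.
pose F x := if x \in A then p x else 0.
pose G x := if x \in A then 1 - p x else 1.
have := @bigA_distr R 0 1 *%R +%R N F G => /=.
rewrite big1 => [/esym|x _]; last first.
  by rewrite /F /G; case: (x \in A) => /=; rewrite ?add0r // addrCA subrr addr0.
rewrite (bigID (fun f : {set N} => f \subset A)) /= [X in _ + X]big1 ?addr0 => [<-|f].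
  apply: eq_bigr => f fA; rewrite (bigID (mem A)) /= [X in _ * X]big1 ?mulr1.
    by apply: eq_bigr => x xA; rewrite /F /G xA.
  move=> x xNA; have xNf : x \notin f by apply: contra xNA; apply: (subsetP fA).
  by rewrite /G (negbTE xNf) (negbTE xNA).
by case/subsetPn=> x xf xNA; rewrite (bigD1 x) //= xf /F (negbTE xNA) mul0r.
Qed.

End ProductWeights.

Section WellFormedPCFT.
Variables (N : finType) (R : realFieldType) (T : pcft N R).
Hypothesis hT : is_pcft T.
Implicit Types (f c : {set N}).

Lemma pcft_root : root T \in V T.
Proof. by case: hT => -[]. Qed.

Lemma pcft_edge u w : E T u w -> (u \in V T) && (w \in V T).
Proof. by case: hT => -[_ edgeV] _ _ _ _; apply: edgeV. Qed.

Lemma pcft_acyclic : acyclic (E T).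
Proof. by case: hT. Qed.

Lemma UE c : U T c =
  \sum_(f : {set N} | f \subset BEs T) weight (BEs T) (prob T) f * (S T (root T) f c)%:R.
Proof. by []. Qed.

Lemma S_local f1 f2 c1 c2 : f1 :&: BEs T = f2 :&: BEs T -> c1 :&: CBEs T = c2 :&: CBEs T ->
  S T (root T) f1 c1 = S T (root T) f2 c2.
Proof.
move=> f12 c12; apply: (eq_struct_fuel (W := V T)) pcft_root => //.
- by move=> u _ w /pcft_edge/andP[].
- by move=> x xV gx; apply: mem_setI_eq f12 _; rewrite inE xV gx.
- by move=> x xV gx; apply: mem_setI_eq c12 _; rewrite inE xV gx.
Qed.

Lemma U_local c : U T c = U T (c :&: CBEs T).
Proof. by apply: eq_bigr => f _; rewrite (@S_local f f c (c :&: CBEs T)) // -setIA setIid. Qed.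

End WellFormedPCFT.

Section Images.
Variable N : finType.
Implicit Types (r : N -> N).

Lemma eq_exists_image (e1 e2 P : pred N) r :
  (forall y, e2 y = [exists x, e1 x && (r x == y)]) ->
  [exists y, e2 y && P y] = [exists x, e1 x && P (r x)].
Proof.
move=> e2E; apply/existsP/existsP => [[y] | [x /andP[e1x Prx]]].
  by rewrite e2E => /andP[/existsP[x /andP[e1x /eqP<-]] Prx]; exists x; rewrite e1x.
by exists (r x); rewrite e2E Prx andbT; apply/existsP; exists x; rewrite e1x /=.
Qed.

Lemma eq_forall_image (e1 e2 P : pred N) r :
  (forall y, e2 y = [exists x, e1 x && (r x == y)]) ->
  [forall y, e2 y ==> P y] = [forall x, e1 x ==> P (r x)].
Proof.
move=> e2E; apply/negb_inj; rewrite !negb_forall.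
have := eq_exists_image (predC P) e2E.
by congr (_ = _); apply: eq_existsb => z; rewrite negb_imply.
Qed.

End Images.

Section Assignment.
Variable N : finType.
Implicit Types (c : {set N}).

Definition assign (x : N) (b : bool) c : {set N} :=
  if b then x |: c else c :\ x.

Lemma mem_assign x b c y : y != x -> (y \in assign x b c) = (y \in c).
Proof. by move=> yNx; rewrite /assign; case: b; rewrite !inE (negbTE yNx). Qed.

Lemma assign_id x b c : (x \in assign x b c) = b.
Proof. by rewrite /assign; case: b; rewrite !inE eqxx. Qed.

End Assignment.

Section Composition.
Variables (N : finType) (R : realFieldType) (T T' : pcft N R) (v : N).
Hypotheses (hT : is_pcft T) (hT' : is_pcft T') (hTT' : agree T T').
Hypotheses (vC : v \in CBEs T) (vNV' : v \notin V T').
Implicit Types (f c : {set N}) (u w : N).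

Local Notation T2 := (compose T v T').

Definition redirect w := if w == v then root T' else w.

Lemma gam_v : gam T v = CBE.
Proof. by case/setIdP: vC => _; case: (gam T v). Qed.

Lemma redirect_V w : w \in V T -> redirect w \in V T2.
Proof.
move=> wV; rewrite /redirect; case: eqVneq => [_ | wNv].
  by rewrite inE (pcft_root hT') orbT.
by rewrite !inE wNv wV.
Qed.

Lemma compose_edge_inner u w : u \in V T' -> E T2 u w = E T' u w.
Proof.
move=> uV'; rewrite /=; case: (boolP (u \in V T :\ v)) => //= /setD1P[_ uV].
have [_ _ ET] := hTT' uV uV'; rewrite !ET.
have -> : E T' u v = false by apply: contraNF vNV' => /(pcft_edge hT')/andP[].
by rewrite andbF orbF; case: (E T' u w); rewrite ?andbF ?orbT.
Qed.

Lemma compose_edge_outer u w' : u \notin V T' ->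
  E T2 u w' = (u \in V T :\ v) && [exists w, E T u w && (redirect w == w')].
Proof.
move=> uNV' /=; have -> : E T' u w' = false.
  by apply: contraNF uNV' => /(pcft_edge hT')/andP[].
rewrite orbF; apply: andb_id2l => _; apply/idP/existsP.
  case/orP=> [/andP[/setD1P[w'Nv _] euw'] | /andP[/eqP-> euv]].
    by exists w'; rewrite euw' /redirect (negbTE w'Nv) /=.
  by exists v; rewrite euv /redirect !eqxx.
case=> w /andP[euw /eqP<-]; rewrite /redirect; case: eqVneq => [wv | wNv].
  by rewrite eqxx -wv euw orbT.
by rewrite !inE wNv; case/andP: (pcft_edge hT euw) => _ ->; rewrite euw.
Qed.

Lemma compose_edge_V u w : E T2 u w -> w \in V T2.
Proof.
case: (boolP (u \in V T')) => [uV' | uNV'].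
  by rewrite compose_edge_inner // => /(pcft_edge hT')/andP[_ wV']; rewrite inE wV' orbT.
rewrite compose_edge_outer // => /andP[_ /existsP[w0 /andP[euw0 /eqP<-]]].
by apply: redirect_V; case/andP: (pcft_edge hT euw0).
Qed.

Lemma compose_acyclic : acyclic (E T2).
Proof.
pose rk u := if u \in V T' then ndesc (E T') u else (ndesc (E T) u + #|N|)%N.
apply: (@acyclic_rank _ _ rk) => u w.
case: (boolP (u \in V T')) => [uV' | uNV'].
  rewrite compose_edge_inner // => euw; case/andP: (pcft_edge hT' euw) => _ wV'.
  by rewrite /rk uV' wV'; apply: ndesc_lt (pcft_acyclic hT') euw.
have rk_inner w' : w' \in V T' -> (rk w' < rk u)%N.
  move=> w'V'; rewrite /rk w'V' (negbTE uNV') -addn1 addnC leq_add ?max_card //.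
  exact: ndesc_gt0.
rewrite compose_edge_outer // => /andP[_ /existsP[w0 /andP[euw0 /eqP<-]]].
rewrite /redirect; case: eqVneq => [_ | _]; first by rewrite rk_inner ?(pcft_root hT').
case: (boolP (w0 \in V T')) => [/rk_inner // | w0NV'].
by rewrite /rk (negbTE uNV') (negbTE w0NV') ltn_add2r; apply: ndesc_lt (pcft_acyclic hT) euw0.
Qed.

Lemma struct_fuel_compose_inner n u f c : u \in V T' ->
  struct_fuel T2 n u f c = struct_fuel T' n u f c.
Proof.
move=> uV'; apply: (eq_struct_fuel (W := V T')) => //.
- by move=> x xV'; rewrite /= xV'.
- by move=> x xV' y; rewrite compose_edge_inner.
- by move=> x _ y /(pcft_edge hT')/andP[].
Qed.

Lemma struct_fuel_shared n u f b c : u \in V T -> u \in V T' ->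
  struct_fuel T n u f (assign v b c) = struct_fuel T' n u f c.
Proof.
move=> uV uV'; apply: (eq_struct_fuel (W := V T :&: V T')); rewrite ?inE ?uV ?uV' //.
- by move=> x /setIP[xV xV']; case: (hTT' xV xV').
- by move=> x /setIP[xV xV'] y; case: (hTT' xV xV') => _ _ ->.
- move=> x /setIP[xV xV'] y exy; rewrite inE.
  case/andP: (pcft_edge hT' exy) => _ ->; case: (hTT' xV xV') => _ _ ET.
  by rewrite -ET in exy; case/andP: (pcft_edge hT exy) => _ ->.
- by move=> x /setIP[_ xV'] _; rewrite mem_assign //; apply: contraNneq vNV' => <-.
Qed.

Lemma ndesc_root' : (ndesc (E T') (root T') <= #|V T'|)%N.
Proof. by apply: ndesc_le_card (pcft_root hT') => x y /(pcft_edge hT')/andP[]. Qed.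

(* The extra #|V T'| units of fuel pay for evaluating the copy of T' that replaced v. *)
Lemma struct_fuel_compose n u f c : u \in V T -> (ndesc (E T) u <= n)%N ->
  struct_fuel T2 (n + #|V T'|) (redirect u) f c =
  struct_fuel T n u f (assign v (S T' (root T') f c) c).
Proof.
set b := S T' (root T') f c.
elim: n u => [|n IHn] u uV le_u; first by have := leq_trans (ndesc_gt0 _ u) le_u.
case: (eqVneq u v) => [-> | uNv].
  rewrite /redirect eqxx struct_fuelS gam_v assign_id.
  rewrite struct_fuel_compose_inner ?(pcft_root hT') //.
  apply: struct_fuel_stable (pcft_acyclic hT') _ ndesc_root'.
  exact: leq_trans ndesc_root' (leq_addl _ _).
rewrite /redirect (negbTE uNv).
case: (boolP (u \in V T')) => [uV' | uNV'].
  rewrite struct_fuel_compose_inner // -(struct_fuel_shared _ _ b) //.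
  exact: struct_fuel_stable (pcft_acyclic hT) (leq_trans le_u (leq_addr _ _)) le_u.
have e2E w' : E T2 u w' = [exists w, E T u w && (redirect w == w')].
  by rewrite compose_edge_outer // !inE uNv uV.
have IHw w : E T u w ->
    struct_fuel T2 (n + #|V T'|) (redirect w) f c = struct_fuel T n w f (assign v b c).
  move=> euw; apply: IHn; first by case/andP: (pcft_edge hT euw).
  by rewrite -ltnS (leq_trans (ndesc_lt (pcft_acyclic hT) euw)).
rewrite addSn !struct_fuelS /= (negbTE uNV'); case: (gam T u) => //.
- by rewrite (eq_exists_image _ e2E); apply: eq_existsb => w; apply: andb_id2l => /IHw.
- by rewrite (eq_forall_image _ e2E); apply: eq_forallb => w; apply: implyb_id2l => /IHw.
- by rewrite mem_assign.
Qed.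

Lemma S_compose f c :
  S T2 (root T2) f c = S T (root T) f (assign v (S T' (root T') f c) c).
Proof.
have rV := pcft_root hT.
rewrite /S -struct_fuel_compose ?ndesc_le_card // => [|x y /(pcft_edge hT)/andP[]//].
have le_V2 : (ndesc (E T2) (redirect (root T)) <= #|V T2|)%N.
  exact: ndesc_le_card compose_edge_V (redirect_V rV).
apply: struct_fuel_stable compose_acyclic le_V2 (leq_trans le_V2 _).
exact: leq_trans (leq_card_setU _ _) (leq_add (subset_leq_card (subsetDl _ _)) (leqnn _)).
Qed.

Lemma BEs_compose : BEs T2 = BEs T :|: BEs T'.
Proof.
apply/setP => x; rewrite !inE /=; case: (boolP (x \in V T')) => xV'; rewrite ?orbT ?orbF /=.
  by case xV: (x \in V T) => //=; case: (hTT' xV xV') => -> _ _; rewrite orbb.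
by case: eqVneq => [-> | _]; rewrite ?gam_v ?andbF.
Qed.

Lemma CBEs_compose : CBEs T2 = (CBEs T :\ v) :|: CBEs T'.
Proof.
apply/setP => x; rewrite !inE /=; case: (boolP (x \in V T')) => xV'; rewrite ?orbT ?orbF /=.
  have -> : x != v by apply: contraNneq vNV' => <-.
  by case xV: (x \in V T) => //=; case: (hTT' xV xV') => -> _ _; rewrite orbb.
by rewrite andbA.
Qed.

Lemma prob_compose : {in BEs T, prob T2 =1 prob T}.
Proof.
by move=> x /setIdP[xV _] /=; case: ifP => // xV'; case: (hTT' xV xV').
Qed.

Lemma prob_compose' : {in BEs T', prob T2 =1 prob T'}.
Proof. by move=> x /setIdP[xV' _] /=; rewrite xV'. Qed.

Lemma U_compose_sum c : [disjoint BEs T & BEs T'] ->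
  U T2 c = \sum_(f2 : {set N} | f2 \subset BEs T')
             weight (BEs T') (prob T') f2 * U T (assign v (S T' (root T') f2 c) c).
Proof.
move=> dBE; rewrite UE BEs_compose sum_subset_setU // exchange_big /=.
apply: eq_bigr => f2 f2B; rewrite UE big_distrr /=; apply: eq_bigr => f1 f1B.
have f1B' : [disjoint f1 & BEs T'] := disjointWl f1B dBE.
have f2B' : [disjoint f2 & BEs T] by rewrite disjoint_sym (disjointWr f2B).
have e1 : (f1 :|: f2) :&: BEs T = f1 :&: BEs T := setIUl_disjoint _ f2B'.
have e2 : (f1 :|: f2) :&: BEs T' = f2 :&: BEs T' by rewrite setUC (setIUl_disjoint _ f1B').
rewrite weight_setU // (eq_weight prob_compose e1) (eq_weight prob_compose' e2).
rewrite S_compose (S_local hT' e2 (erefl _)) (S_local hT e1 (erefl _)).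
by rewrite -mulrA mulrCA.
Qed.

Lemma U_compose c : [disjoint BEs T & BEs T'] ->
  U T2 c = U T' c * U T (v |: c) + (1 - U T' c) * U T (c :\ v).
Proof.
move=> dBE; rewrite U_compose_sum //.
have U_assign b :
    U T (assign v b c) = U T (c :\ v) + b%:R * (U T (v |: c) - U T (c :\ v)).
  by rewrite /assign; case: b; rewrite ?mul1r ?mul0r ?addr0 // addrC subrK.
under eq_bigr do rewrite U_assign mulrDr mulrA.
by rewrite big_split /= -!big_distrl /= sum_weight -UE; ring.
Qed.

End Composition.

Theorem theorem26 (N : finType) (R : realFieldType) (T T' : pcft N R) (v : N) :
  is_pcft T -> is_pcft T' -> agree T T' ->
  v \in CBEs T -> v \notin V T' ->
  BEs T :&: BEs T' = set0 ->
  CBEs (compose T v T') = (CBEs T :\ v) :|: CBEs T' /\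
  rep (CBEs (compose T v T')) (U (compose T v T'))
    = sqsubst (rep (CBEs T) (U T)) v (rep (CBEs T') (U T')).
Proof.
move=> hT hT' hTT' vC vNV' /eqP; rewrite setI_eq0 => dBE.
split; first exact: CBEs_compose hTT' vNV'.
rewrite (CBEs_compose hTT' vNV'); apply: rep_unique.
apply: represents_sqsubst (represents_rep _ _) (represents_rep _ _)
  (U_local hT) (U_local hT') _ => c.
exact: U_compose hT hT' hTT' vC vNV' c dBE.
Qed.
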